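(* Let $S$ be a semidomain. The following are equivalent: (a) $S$ is an FFS; (b) $S[x]$ is an FFS; (c) $S[x^{\pm1}]$ is an FFS.
   Context: A semidomain is a subset $S$ of an integral domain $R$ containing $0$ and $1$ and closed under addition and multiplication; $S^*=S\setminus\{0\}$ is a monoid under multiplication, with units forming $S^\times$; $b,c\in S^*$ are associates if each divides the other in $S^*$. An atom is a nonunit $a\in S^*$ such that $a=bc$ with $b,c\in S^*$ forces $b$ or $c$ to be a unit; $S$ is atomic if every nonunit of $S^*$ is a finite product of atoms. $S$ is a finite factorization semidomain (FFS) if $S$ is atomic and every element of $S^*$ has only finitely many factorizations into atoms, where factorizations are considered up to order and associates of the atoms (equivalently, every element of $S^*$ has only finitely many divisors in $S^*$ up to associates). $S[x]$ (resp. $S[x^{\pm1}]$) is the semidomain of polynomials (resp. Laurent polynomials) in $R[x]$ (resp. $R[x^{\pm1}]$) with coefficients in $S$. *)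

From HB Require Import structures.
From mathcomp Require Import all_boot all_order all_algebra fraction.
From Stdlib Require List Permutation.
Set Implicit Arguments. Unset Strict Implicit. Unset Printing Implicit Defensive.
Import Order.TTheory GRing.Theory Num.Theory.
Local Open Scope ring_scope.

Definition semidomain (R : idomainType) (S : R -> Prop) : Prop :=
  S 0 /\ S 1 /\ (forall a b, S a -> S b -> S (a + b)) /\
  (forall a b, S a -> S b -> S (a * b)).

Section Factorization.
Variables (D : comNzRingType) (S : D -> Prop).

Definition snz (x : D) : Prop := S x /\ x <> 0.

Definition sdvd (b c : D) : Prop := exists d, snz d /\ c = b * d.

Definition sunit (u : D) : Prop := snz u /\ exists v, snz v /\ u * v = 1.

Definition sassoc (b c : D) : Prop := snz b /\ snz c /\ sdvd b c /\ sdvd c b.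

Definition satom (a : D) : Prop :=
  snz a /\ ~ sunit a /\
  forall b c, snz b -> snz c -> a = b * c -> sunit b \/ sunit c.

Definition satomic : Prop :=
  forall x, snz x -> ~ sunit x ->
    exists s : seq D, List.Forall satom s /\ x = \prod_(a <- s) a.

Definition sfactorization (x : D) (s : seq D) : Prop :=
  List.Forall satom s /\ \prod_(a <- s) a = x.

Definition fact_equiv (s t : seq D) : Prop :=
  exists t', Permutation.Permutation t t' /\ List.Forall2 sassoc s t'.

Definition FFS : Prop :=
  satomic /\
  forall x, snz x ->
    exists L : seq (seq D),
      forall s, sfactorization x s -> exists t, List.In t L /\ fact_equiv s t.
End Factorization.

Definition polyS (R : idomainType) (S : R -> Prop) : {poly R} -> Prop :=
  fun p => forall i, S p`_i.

(* S[x^{+-1}]: Laurent polynomials with coefficients in S, realised inside the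
   fraction field of R[x] as the elements p / x^n with p in S[x]. *)
Definition laurentS (R : idomainType) (S : R -> Prop) : {fraction {poly R}} -> Prop :=
  fun f => exists (p : {poly R}) (n : nat), polyS S p /\ f = tofrac p / tofrac ('X^n).

(* In a multiplicative submonoid S^* of an integral domain, being an FFS is
   the same as every element having finitely many divisors up to associates.
   Divisors of x are subproducts of factorizations of x; conversely, if the
   divisor classes of x are listed, the number of listed classes dividing y
   drops strictly along proper divisors, which yields atomicity and bounds the
   length of factorizations.
   This divisor-finiteness lifts from S to S[x]: a divisor g of f is determined
   up to associates by the class of its leading coefficient, which divides the
   leading coefficient of f, and by the monic polynomial it spans over Frac(R),
   which divides f there. It lifts from S[x] to S[x^{+-1}] because, up to a
   monomial unit, every nonzero Laurent polynomial is a polynomial with nonzero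
   constant term, and divisibility between such polynomials is the same in both
   semidomains. It descends back to S because S embeds into both as constants,
   reflecting divisibility. *)

From Pilot Require Import Defs.
From mathcomp Require Import all_boot all_order all_algebra fraction zify ring.
From mathcomp Require Import boolp.
From Stdlib Require List Permutation.
Set Implicit Arguments. Unset Strict Implicit. Unset Printing Implicit Defensive.
Import GRing.Theory.
Local Open Scope ring_scope.

Lemma InP (T : eqType) (x : T) (s : seq T) : reflect (List.In x s) (x \in s).
Proof.
elim: s => [|a s IH] /=; first by constructor.
rewrite in_cons; apply: (iffP orP) => [[/eqP->|/IH h]|[->|/IH h]];
  by [left | right].
Qed.

Lemma Permutation_perm_eq (T : eqType) (s t : seq T) :
  Permutation.Permutation s t -> perm_eq s t.
Proof.
elim=> //= [x l l' _|x y l|l l' l'' _ h1 _]; first by rewrite perm_cons.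
- by apply/permPl; exact: (perm_catCA [:: y] [:: x] l).
- exact: perm_trans.
Qed.

Lemma sub_count_lt (T : Type) (p q : pred T) (s : seq T) :
  subpred p q -> has (predD q p) s -> (count p s < count q s)%N.
Proof.
move=> pq; elim: s => //= x s IH /orP[/andP[/negbTE-> ->]|/IH lt_pq].
  by rewrite add0n add1n ltnS sub_count.
have le_pq y : (p y <= q y)%N by case py: (p y); rewrite ?(pq _ py).
by rewrite -addnS leq_add.
Qed.

Lemma choose_witnesses (A B : eqType) (Q : A -> B -> Prop) (ks : seq A) :
  exists L : seq B,
    forall k, k \in ks -> (exists g, Q k g) -> exists2 g, g \in L & Q k g.
Proof.
elim: ks => [|k ks [L hL]]; first by exists [::].
have [[g0 Qg0]|nQ] := pselect (exists g, Q k g).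
  exists (g0 :: L) => k'; rewrite in_cons => /orP[/eqP-> _|/hL hk /hk[g gL Qg]].
    by exists g0; rewrite ?mem_head.
  by exists g; rewrite ?in_cons ?gL ?orbT.
by exists L => k'; rewrite in_cons => /orP[/eqP-> /nQ|/hL].
Qed.

Fixpoint seqs_upto {T : Type} (L : seq T) (n : nat) : seq (seq T) :=
  if n is n'.+1 then [::] :: [seq a :: u | a <- L, u <- seqs_upto L n']
  else [:: [::]].

Lemma seqs_uptoP (T : eqType) (r : T -> T -> Prop) (L s : seq T) (n : nat) :
  List.Forall (fun a => exists2 l, l \in L & r a l) s -> (size s <= n)%N ->
  exists2 t, t \in seqs_upto L n & List.Forall2 r s t.
Proof.
elim: s n => [|a s IH] [|n] //= hs; first by exists [::]; rewrite ?mem_head.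
  by exists [::]; rewrite ?mem_head.
move: hs => /List.Forall_cons_iff[[l lL ral] hs] /(IH _ hs)[t tn st].
exists (l :: t); last by constructor.
by rewrite in_cons (allpairs_f (fun a u => a :: u) lL tn) orbT.
Qed.

Fixpoint subprods {R : comNzRingType} (t : seq R) : seq R :=
  if t is a :: t' then subprods t' ++ map ( *%R a) (subprods t') else [:: 1].

Lemma subprods_perm (R : comNzRingType) (t t1 t2 : seq R) :
  perm_eq (t1 ++ t2) t -> \prod_(a <- t1) a \in subprods t.
Proof.
elim: t t1 t2 => [|a t IH] t1 t2 /= hp.
  by case: t1 hp => [|b t1] /perm_size //; rewrite big_nil mem_seq1.
have : a \in t1 ++ t2 by rewrite (perm_mem hp) mem_head.
rewrite mem_cat => /orP[at1|at2]; rewrite mem_cat; apply/orP; [right|left].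
  rewrite (perm_big _ (perm_to_rem at1)) big_cons; apply: map_f.
  apply: (IH _ t2); rewrite -(perm_cons a); apply: perm_trans hp.
  by rewrite -cat_cons perm_cat2r perm_sym perm_to_rem.
apply: (IH _ (rem a t2)); rewrite -(perm_cons a); apply: perm_trans hp.
by rewrite (perm_catCA [:: a] t1) /= perm_cat2l perm_sym perm_to_rem.
Qed.

Lemma tofrac_inj (R : idomainType) : injective (@tofrac R).
Proof. by move=> x y /eqP; rewrite tofrac_eq => /eqP. Qed.

Section Divisibility.
Variables (D : idomainType) (S : D -> Prop).
Hypotheses (S1 : S 1) (Smul : forall a b, S a -> S b -> S (a * b)).

Local Notation snz := (Defs.snz S).
Local Notation sdvd := (Defs.sdvd S).
Local Notation sunit := (Defs.sunit S).
Local Notation sassoc := (Defs.sassoc S).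
Local Notation satom := (Defs.satom S).

Definition fin_divisors : Prop :=
  forall x, snz x -> exists L : seq D,
    forall d, snz d -> sdvd d x -> exists2 l, l \in L & sassoc d l.

Lemma snz1 : snz 1.
Proof. by split=> //; apply/eqP; exact: oner_neq0. Qed.

Lemma snzM a b : snz a -> snz b -> snz (a * b).
Proof.
move=> [Sa /eqP a0] [Sb /eqP b0]; split; first exact: Smul.
by apply/eqP; rewrite mulf_neq0.
Qed.

Lemma snz_prod s : List.Forall snz s -> snz (\prod_(a <- s) a).
Proof.
elim=> [|a s' ha _ IH]; first by rewrite big_nil; exact: snz1.
by rewrite big_cons; exact: snzM.
Qed.

Lemma satom_snz a : satom a -> snz a.
Proof. by case. Qed.

Lemma sdvd_refl x : sdvd x x.
Proof. by exists 1; split; [exact: snz1 | rewrite mulr1]. Qed.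

Lemma sdvd_trans a b c : sdvd a b -> sdvd b c -> sdvd a c.
Proof.
move=> [d [hd ->]] [e [he ->]]; exists (d * e); split; first exact: snzM.
by rewrite mulrA.
Qed.

Lemma sdvdM a b c d : sdvd a b -> sdvd c d -> sdvd (a * c) (b * d).
Proof.
move=> [u [hu ->]] [v [hv ->]]; exists (u * v); split; first exact: snzM.
by rewrite mulrACA.
Qed.

Lemma sdvd_mulr a c : snz c -> sdvd a (a * c).
Proof. by move=> hc; exists c. Qed.

Lemma sdvd_mull a c : snz c -> sdvd a (c * a).
Proof. by move=> hc; exists c; rewrite mulrC. Qed.

Lemma sdvd_prod_In a s : List.Forall snz s -> List.In a s ->
  sdvd a (\prod_(b <- s) b).
Proof.
elim=> // b s' hb hs IH /= [<-|/IH]; rewrite big_cons.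
  exact/sdvd_mulr/snz_prod.
by move/sdvd_trans; apply; exact: sdvd_mull.
Qed.

Lemma sassoc_refl x : snz x -> sassoc x x.
Proof. by move=> hx; do 2!split=> //; split; exact: sdvd_refl. Qed.

Lemma sassoc_sym x y : sassoc x y -> sassoc y x.
Proof. by move=> [hx [hy [xy yx]]]. Qed.

Lemma sassoc_trans x y z : sassoc x y -> sassoc y z -> sassoc x z.
Proof.
move=> [hx [_ [xy yx]]] [_ [hz [yz zy]]]; do 2!split=> //.
by split; [exact: sdvd_trans xy yz | exact: sdvd_trans zy yx].
Qed.

Lemma sassocM a b c d : sassoc a b -> sassoc c d -> sassoc (a * c) (b * d).
Proof.
move=> [ha [hb [ab ba]]] [hc [hd [cd dc]]].
by split; [|split; [|split]]; [exact: snzM | exact: snzM | exact: sdvdM ..].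
Qed.

Lemma sassoc_prod s t : List.Forall2 sassoc s t ->
  sassoc (\prod_(a <- s) a) (\prod_(a <- t) a).
Proof.
elim=> [|a b s' t' ab _ IH]; first by rewrite !big_nil; exact/sassoc_refl/snz1.
by rewrite !big_cons; exact: sassocM.
Qed.

Lemma sassoc_mulr_unit x u : snz x -> sunit u -> sassoc x (x * u).
Proof.
move=> hx [hu [v [hv uv1]]]; do 2!split=> //; first exact: snzM.
by split; [exists u | exists v; split; rewrite // -mulrA uv1 mulr1].
Qed.

Lemma sunit_of_sdvd_mul b c : b * c <> 0 -> snz c -> sdvd (b * c) b -> sunit c.
Proof.
move=> bc0 hc [e [he Db]]; split=> //; exists e; split=> //.
have b0 : b != 0 by apply/eqP => b0; apply: bc0; rewrite b0 mul0r.
by apply: (mulfI b0); rewrite mulr1 mulrA -Db.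
Qed.

Lemma satom_or_split y : snz y -> ~ sunit y ->
  satom y \/ exists b c, [/\ snz b, snz c, ~ sunit b, ~ sunit c & y = b * c].
Proof.
move=> hy nuy; have [ay|nay] := pselect (satom y); [by left | right].
apply: contra_notP nay => nsplit; split=> //; split=> // b c hb hc Dy.
by apply: contra_notP nsplit => /not_orP[nub nuc]; exists b, c.
Qed.

Section DivisorCount.
Variables (x : D) (L : seq D).
Hypothesis hL : forall d, snz d -> sdvd d x -> exists2 l, l \in L & sassoc d l.

Definition divcount y := count (fun l => `[< sdvd l y >]) L.

Lemma divcount_lt y b : snz y -> sdvd y x -> sdvd b y -> ~ sdvd y b ->
  (divcount b < divcount y)%N.
Proof.
move=> hy yx dvd_by ndvd_yb.
apply: sub_count_lt => [l /asboolP lb|]; first exact/asboolP/(sdvd_trans lb).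
have [l lL [_ [_ [yl ly]]]] := hL hy yx.
apply/hasP; exists l => //=; apply/andP; split; last exact/asboolP.
by apply/asboolP => lb; apply: ndvd_yb; exact: sdvd_trans lb.
Qed.

Lemma divisor_atomic y : snz y -> sdvd y x -> ~ sunit y ->
  exists s, List.Forall satom s /\ y = \prod_(a <- s) a.
Proof.
have [n] := ubnP (divcount y); elim: n y => // n IH y lt_yn hy yx nuy.
have [ay|[b [c [hb hc nub nuc Dy]]]] := satom_or_split hy nuy.
  by exists [:: y]; split; [constructor | rewrite big_seq1].
have y0 : y <> 0 by case: hy.
have Dy' : y = c * b by rewrite mulrC.
have dvd_by : sdvd b y by rewrite Dy; exact: sdvd_mulr.
have dvd_cy : sdvd c y by rewrite Dy'; exact: sdvd_mulr.
have [|sb [hsb Db]] := IH b _ hb (sdvd_trans dvd_by yx) nub.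
  apply: (@leq_trans (divcount y)); last by rewrite -ltnS.
  apply: divcount_lt => // yb; apply: nuc.
  by apply: (sunit_of_sdvd_mul (b := b)); rewrite -?Dy.
have [|sc [hsc Dc]] := IH c _ hc (sdvd_trans dvd_cy yx) nuc.
  apply: (@leq_trans (divcount y)); last by rewrite -ltnS.
  apply: divcount_lt => // yc; apply: nub.
  by apply: (sunit_of_sdvd_mul (b := c)); rewrite -?Dy'.
exists (sb ++ sc); split; first exact/List.Forall_app.
by rewrite big_cat Dy Db Dc.
Qed.

Lemma size_factorization_le s y : snz y -> sdvd y x ->
  List.Forall satom s -> \prod_(a <- s) a = y -> (size s <= divcount y)%N.
Proof.
elim: s y => // a s IH y hy yx /List.Forall_cons_iff[[ha [nua _]] hs].
rewrite big_cons => Dy; set p := \prod_(b <- s) b in Dy.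
have hp : snz p by apply/snz_prod/(List.Forall_impl _ satom_snz).
have dvd_py : sdvd p y by rewrite -Dy; exact: sdvd_mull.
have ndvd_yp : ~ sdvd y p.
  move=> yp; apply: nua; apply: (sunit_of_sdvd_mul (b := p)) => //;
    rewrite mulrC Dy //; by case: hy.
exact: leq_ltn_trans (IH _ hp (sdvd_trans dvd_py yx) hs erefl)
  (divcount_lt hy yx dvd_py ndvd_yp).
Qed.

End DivisorCount.

Lemma FFS_fin_divisors : FFS S -> fin_divisors.
Proof.
move=> [hat hff] x hx; have [Ls hLs] := hff x hx.
exists (1 :: x :: flatten (map subprods Ls)) => d hd [e [he Dx]].
have [[_ [v [hv dv1]]]|nud] := pselect (sunit d).
  exists 1; first exact: mem_head.
  do 2!split=> //; first exact: snz1.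
  by split; [exists v | exists d; split; rewrite ?mul1r].
have [[_ [v [hv ev1]]]|nue] := pselect (sunit e).
  exists x; first by rewrite !inE eqxx orbT.
  do 3!split=> //; first by exists e.
  by exists v; split; rewrite // Dx -mulrA ev1 mulr1.
have [sd [hsd Dd]] := hat d hd nud.
have [se [hse De]] := hat e he nue.
have [|t [/InP tLs [t' [tt' st']]]] := hLs (sd ++ se) _.
  by split; [exact/List.Forall_app | rewrite big_cat -Dd -De].
have [l1 [l2 [sdl1 [_ Dt']]]] := List.Forall2_app_inv_l _ _ st'; subst t'.
exists (\prod_(a <- l1) a); last by rewrite Dd; exact: sassoc_prod.
rewrite !inE; apply/orP; right; apply/orP; right; apply/flatten_mapP.
exists t; rewrite // (subprods_perm (t2 := l2)) // perm_sym.
exact: Permutation_perm_eq.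
Qed.

Lemma fin_divisors_FFS : fin_divisors -> FFS S.
Proof.
move=> hfd; split=> [x hx nux|x hx]; have [L hL] := hfd x hx.
  exact: (divisor_atomic hL hx (sdvd_refl x) nux).
exists (seqs_upto L (divcount L x)) => s [hs Dx].
have hs' : List.Forall snz s := List.Forall_impl _ satom_snz hs.
have [|t /InP tL st] := @seqs_uptoP _ sassoc L s (divcount L x) _
  (size_factorization_le hL hx (sdvd_refl x) hs Dx).
  apply/List.Forall_forall => a ain; rewrite -Dx in hL.
  exact: hL (proj1 (List.Forall_forall _ _) hs' a ain) (sdvd_prod_In hs' ain).
by exists t; split=> //; exists t; split; [exact: Permutation.Permutation_refl|].
Qed.

Lemma FFS_fin_divisorsP : FFS S <-> fin_divisors.
Proof. by split; [exact: FFS_fin_divisors | exact: fin_divisors_FFS]. Qed.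

End Divisibility.

Lemma fin_divisors_reflect (D D' : idomainType) (S : D -> Prop) (S' : D' -> Prop)
    (phi : D -> D') :
  (forall a b, S' a -> S' b -> S' (a * b)) -> {morph phi : a b / a * b} ->
  (forall a, snz S a -> snz S' (phi a)) ->
  (forall a b, snz S a -> snz S b ->
     Defs.sdvd S' (phi a) (phi b) -> Defs.sdvd S a b) ->
  fin_divisors S' -> fin_divisors S.
Proof.
move=> S'mul phiM snz_phi phi_sdvd hfd c hc.
have [L' hL'] := hfd _ (snz_phi _ hc).
have [L hL] := choose_witnesses (fun l e => snz S e /\ sassoc S' (phi e) l) L'.
exists L => d hd [e [he Dc]].
have [|l lL' dl] := hL' (phi d) (snz_phi _ hd).
  by exists (phi e); rewrite ?Dc ?phiM; split; [exact: snz_phi|].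
have [e' e'L [he' e'l]] := hL _ lL' (ex_intro _ d (conj hd dl)).
have [_ [_ [de' e'd]]] := sassoc_trans S'mul dl (sassoc_sym e'l).
by exists e' => //; do 2!split=> //; split; exact: phi_sdvd.
Qed.

Section MonicDivisors.
Variable F : fieldType.
Implicit Types f p d : {poly F}.

Lemma monic_normalize p : p != 0 -> (lead_coef p)^-1 *: p \is monic.
Proof. by move=> p0; rewrite monicE lead_coefZ mulVf ?lead_coef_eq0. Qed.

Lemma min_monic_divisor f : (1 < size f)%N -> exists p,
  [/\ p \is monic, p %| f, (1 < size p)%N &
      forall d, d %| f -> (1 < size d)%N -> (size p <= size d)%N].
Proof.
move=> f1.
pose P k := `[< exists2 d, d %| f & (1 < size d)%N /\ size d = k >].
have exP : exists k, P k by exists (size f); apply/asboolP; exists f.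
case: (ex_minnP exP) => k /asboolP[d df [d1 <-]] dmin.
have lcd0 : (lead_coef d)^-1 != 0.
  by rewrite invr_eq0 lead_coef_eq0 -size_poly_gt0 ltnW.
exists ((lead_coef d)^-1 *: d); rewrite size_scale //; split=> //.
- by apply: monic_normalize; rewrite -size_poly_gt0 ltnW.
- by rewrite dvdpZl.
- by move=> d' d'f d'1; apply: dmin; apply/asboolP; exists d'.
Qed.

Lemma fin_monic_divisors f : f != 0 ->
  exists M : seq {poly F}, forall m, m \is monic -> m %| f -> m \in M.
Proof.
have [n] := ubnP (size f); elim: n f => // n IH f lt_fn f0.
have [le_f1|lt1f] := leqP (size f) 1.
  exists [:: 1] => m mm mf; rewrite mem_seq1 -eqp_monic ?monic1 //.
  rewrite -size_poly_eq1 eqn_leq (leq_trans (dvdp_leq f0 mf) le_f1).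
  by rewrite size_poly_gt0 monic_neq0.
have [p [pm pf p1 pmin]] := min_monic_divisor lt1f.
have p0 := monic_neq0 pm.
set q := f %/ p; have Df : f = q * p by rewrite divpK.
have q0 : q != 0 by apply: contra_neq f0 => q0; rewrite Df q0 mul0r.
have [|M hM] := IH q _ q0.
  by move: lt_fn p1; rewrite Df size_mul //; move: (size q) (size p); lia.
exists (M ++ [seq m * p | m <- M]) => g gm gf; rewrite mem_cat.
have [cop|ncop] := boolP (coprimep g p).
  by rewrite hM // -(Gauss_dvdpl _ cop) -Df.
(* [p] is irreducible: the gcd of [g] and [p] is a nonconstant divisor of [f],
   hence at least as large as [p] *)
have pg : p %| g.
  have d0 : gcdp g p != 0 by rewrite gcdp_eq0 negb_and p0 orbT.
  have d1 : (1 < size (gcdp g p))%N.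
    by rewrite ltn_neqAle eq_sym -coprimep_def ncop size_poly_gt0.
  have dp : gcdp g p %= p.
    rewrite -dvdp_size_eqp ?dvdp_gcdr // eqn_leq dvdp_leq ?dvdp_gcdr //.
    by rewrite pmin // (dvdp_trans (dvdp_gcdr g p)).
  by rewrite -(eqp_dvdl _ dp) dvdp_gcdl.
have Dg : g = g %/ p * p by rewrite divpK.
apply/orP; right; rewrite Dg; apply: map_f; apply: hM.
  by rewrite -(monicMr _ pm) -Dg.
by rewrite -(dvdp_mul2r _ _ p0) -Dg -Df.
Qed.

End MonicDivisors.

Section PolynomialSemidomains.
Variables (R : idomainType) (S : R -> Prop).
Hypotheses (S0 : S 0) (S1 : S 1) (Sadd : forall a b, S a -> S b -> S (a + b))
  (Smul : forall a b, S a -> S b -> S (a * b)).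

Local Notation P := (polyS S).
Local Notation T := (laurentS S).
Local Notation mp := (map_poly (@tofrac R)).

Lemma polyS1 : P 1.
Proof. by move=> i; rewrite coef1; case: (i == 0)%N; rewrite ?mulr1n ?mulr0n. Qed.

Lemma polyS_mul p q : P p -> P q -> P (p * q).
Proof.
by move=> hp hq i; rewrite coefM; apply: big_ind => // j _; exact: Smul.
Qed.

Lemma polyS_C c : S c -> P c%:P.
Proof. by move=> hc i; rewrite coefC; case: (i == 0)%N. Qed.

Lemma polyS_Xn n : P 'X^n.
Proof.
by move=> i; rewrite coefXn; case: (i == n)%N; rewrite ?mulr1n ?mulr0n.
Qed.

Lemma polyS_divXn q j : P (q * 'X^j) -> P q.
Proof.
by move=> hq i; move: (hq (i + j)%N); rewrite coefMXn ltnNge leq_addl addnK.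
Qed.

Lemma snz_polyC c : snz S c -> snz P c%:P.
Proof.
by move=> [hc /eqP c0]; split; [exact: polyS_C | apply/eqP; rewrite polyC_eq0].
Qed.

Lemma snz_lead_coef g : snz P g -> snz S (lead_coef g).
Proof.
by move=> [hg /eqP g0]; split; [exact: hg | apply/eqP; rewrite lead_coef_eq0].
Qed.

Lemma sdvd_lead_coef g f :
  Defs.sdvd P g f -> Defs.sdvd S (lead_coef g) (lead_coef f).
Proof.
move=> [h [hh ->]]; exists (lead_coef h).
by split; [exact: snz_lead_coef | exact: lead_coefM].
Qed.

Lemma sdvd_polyC a b : snz S b -> Defs.sdvd P a%:P b%:P -> Defs.sdvd S a b.
Proof.
move=> [hb b0] [w [[hw _] Db]].
have {}Db : b = a * w`_0.
  by move: (congr1 (fun p : {poly R} => p`_0) Db); rewrite coefCM coefC.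
exists w`_0; split=> //; split=> // w00; apply: b0.
by rewrite Db w00 mulr0.
Qed.

Lemma fin_divisors_of_polyS : fin_divisors P -> fin_divisors S.
Proof.
apply: fin_divisors_reflect (fun a b _ hb => sdvd_polyC hb) => //.
- exact: polyS_mul.
- exact: polyCM.
- exact: snz_polyC.
Qed.

Definition frac_monic (g : {poly R}) : {poly {fraction R}} :=
  (tofrac (lead_coef g))^-1 *: mp g.

Lemma map_tofrac_inj : injective mp.
Proof. exact: map_inj_poly (@tofrac_inj R) (rmorph0 _). Qed.

Lemma lead_coef_map_tofrac g : lead_coef (mp g) = tofrac (lead_coef g).
Proof. exact: lead_coef_map_inj (@tofrac_inj R) (rmorph0 _) g. Qed.

Lemma frac_monic_monic g : g != 0 -> frac_monic g \is monic.
Proof.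
move=> g0; rewrite monicE /frac_monic lead_coefZ lead_coef_map_tofrac.
by rewrite mulVf // tofrac_eq0 lead_coef_eq0.
Qed.

Lemma frac_monic_dvdp g h : g != 0 -> frac_monic g %| mp (g * h).
Proof.
move=> g0; rewrite dvdpZl ?invr_eq0 ?tofrac_eq0 ?lead_coef_eq0 // rmorphM.
exact/dvdp_mulr/dvdpp.
Qed.

Lemma frac_monic_eq g g' u : g != 0 -> g' != 0 ->
  lead_coef g' = lead_coef g * u -> frac_monic g = frac_monic g' -> g' = g * u%:P.
Proof.
move=> g0 g'0 lg' e; apply: map_tofrac_inj.
have mpE h : h != 0 -> mp h = tofrac (lead_coef h) *: frac_monic h.
  by move=> h0; rewrite scalerA mulfV ?scale1r // tofrac_eq0 lead_coef_eq0.
rewrite rmorphM /= map_polyC /= (mpE g) // (mpE g') // -e lg' rmorphM /=.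
by rewrite -scalerAl [_ * _%:P]mulrC mul_polyC [X in _ = X]scalerA.
Qed.

Lemma sassoc_frac_monic g g' : snz P g -> snz P g' ->
  sassoc S (lead_coef g) (lead_coef g') -> frac_monic g = frac_monic g' ->
  sassoc P g g'.
Proof.
move=> hg hg' [_ [_ [[u [hu Du]] [v [hv Dv]]]]] e.
have [g0 g'0] : g != 0 /\ g' != 0 by split; apply/eqP; [case: hg | case: hg'].
split=> //; split=> //; split.
  by exists u%:P; split; [exact: snz_polyC | exact: frac_monic_eq].
by exists v%:P; split; [exact: snz_polyC | exact: frac_monic_eq].
Qed.

Lemma fin_divisors_polyS : fin_divisors S -> fin_divisors P.
Proof.
move=> hfd f hf.
have [LC hLC] := hfd _ (snz_lead_coef hf).
have mf0 : mp f != 0.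
  rewrite -lead_coef_eq0 lead_coef_map_tofrac tofrac_eq0 lead_coef_eq0.
  by case: hf => _ /eqP.
have [M hM] := fin_monic_divisors mf0.
have [L hL] := choose_witnesses (fun k g =>
  [/\ snz P g, sassoc S (lead_coef g) k.1 & frac_monic g = k.2])
  [seq (c, m) | c <- LC, m <- M].
exists L => g hg gf.
have g0 : g != 0 by case: hg => _ /eqP.
have [c cLC gc] := hLC _ (snz_lead_coef hg) (sdvd_lead_coef gf).
have kin : (c, frac_monic g) \in [seq (c, m) | c <- LC, m <- M].
  apply: allpairs_f cLC _; apply: hM; first exact: frac_monic_monic.
  by case: gf => h [_ ->]; exact: frac_monic_dvdp.
have [g' g'L [hg' /= g'c eg']] := hL _ kin (ex_intro _ g (And3 hg gc erefl)).
exists g' => //; apply: sassoc_frac_monic => //.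
by apply: (sassoc_trans Smul gc); apply: sassoc_sym.
Qed.

Lemma factor_Xn (q : {poly R}) : q != 0 ->
  exists q0 j, q = q0 * 'X^j /\ q0`_0 != 0.
Proof.
move=> q0; have [j [q' /implyP/(_ q0) q'0 Dq]] := multiplicity_XsubC q 0.
by exists q', j; rewrite Dq polyC0 subr0 -horner_coef0; split.
Qed.

Lemma eq_mulXn (a b : {poly R}) i j :
  a * 'X^i = b * 'X^j -> a`_0 != 0 -> b`_0 != 0 -> a = b.
Proof.
move=> e a0 b0; suff ij : i = j.
  by subst j; exact: (mulIf (monic_neq0 (monicXn R i)) e).
have coef_e k : (a * 'X^i)`_k = (b * 'X^j)`_k by rewrite e.
case: (ltngtP i j) => [lt_ij|lt_ji|//].
  move: (coef_e i); rewrite !coefMXn ltnn lt_ij subnn => /eqP.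
  by rewrite (negbTE a0).
move: (coef_e j); rewrite !coefMXn ltnn lt_ji subnn => /eqP.
by rewrite eq_sym (negbTE b0).
Qed.

Lemma tofracXn_neq0 n : tofrac ('X^n : {poly R}) != 0.
Proof. by rewrite tofrac_eq0 monic_neq0 ?monicXn. Qed.

Lemma laurentS1 : T 1.
Proof.
by exists 1, 0%N; split; [exact: polyS1 | rewrite expr0 rmorph1 divr1].
Qed.

Lemma laurentS_mul a b : T a -> T b -> T (a * b).
Proof.
move=> [p [n [hp ->]]] [q [m [hq ->]]]; exists (p * q), (n + m)%N.
by split; [exact: polyS_mul | rewrite exprD !rmorphM /= invfM mulrACA].
Qed.

Lemma snz_tofrac p : snz P p -> snz T (tofrac p).
Proof.
move=> [hp /eqP p0]; split; last by apply/eqP; rewrite tofrac_eq0.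
by exists p, 0%N; split; rewrite // expr0 rmorph1 divr1.
Qed.

Lemma sdvd_tofrac q p : Defs.sdvd P q p -> Defs.sdvd T (tofrac q) (tofrac p).
Proof.
move=> [d [hd ->]]; exists (tofrac d).
by split; [exact: snz_tofrac | exact: rmorphM].
Qed.

Lemma sassoc_tofrac q p : sassoc P q p -> sassoc T (tofrac q) (tofrac p).
Proof.
move=> [hq [hp [qp pq]]]; split; first exact: snz_tofrac.
by split; [exact: snz_tofrac | split; exact: sdvd_tofrac].
Qed.

Lemma sunit_laurentXn b m : sunit T (tofrac 'X^b / tofrac 'X^m).
Proof.
have snzX k l : snz T (tofrac 'X^k / tofrac 'X^l).
  split; first by exists 'X^k, l; split; first exact: polyS_Xn.
  by apply/eqP; rewrite mulf_neq0 ?invr_eq0 ?tofracXn_neq0.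
split; first exact: snzX.
exists (tofrac 'X^m / tofrac 'X^b); split; first exact: snzX.
by rewrite mulf_div [X in _ / X]mulrC divff // mulf_neq0 ?tofracXn_neq0.
Qed.

Lemma laurent_normal f :
  snz T f -> exists2 p, snz P p /\ p`_0 != 0 & sassoc T f (tofrac p).
Proof.
move=> [[p0 [n [hp0 Df]]] f0].
have p00 : p0 != 0 by apply/eqP => p00; apply: f0; rewrite Df p00 rmorph0 mul0r.
have [p [a [Dp0 p_0]]] := factor_Xn p00.
have hp : snz P p.
  split; first by apply: (polyS_divXn (j := a)); rewrite -Dp0.
  by move=> p_eq0; move: p_0; rewrite p_eq0 coef0 eqxx.
exists p => //; apply: sassoc_sym.
have -> : f = tofrac p * (tofrac 'X^a / tofrac 'X^n).
  by rewrite Df Dp0 rmorphM mulrA.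
exact: (sassoc_mulr_unit laurentS_mul (snz_tofrac hp) (sunit_laurentXn a n)).
Qed.

Lemma tofrac_sdvd (q p : {poly R}) : q`_0 != 0 -> p`_0 != 0 ->
  Defs.sdvd T (tofrac q) (tofrac p) -> Defs.sdvd P q p.
Proof.
move=> q_0 p_0 [h [[[r [k [hr Dh]]] h0] Dp]].
have r0 : r != 0 by apply/eqP => r0; apply: h0; rewrite Dh r0 rmorph0 mul0r.
have [r1 [c [Dr r1_0]]] := factor_Xn r0.
have hr1 : snz P r1.
  split; first by apply: (polyS_divXn (j := c)); rewrite -Dr.
  by move=> r1_eq0; move: r1_0; rewrite r1_eq0 coef0 eqxx.
exists r1; split=> //; apply: (@eq_mulXn _ _ k c) => //; last first.
  by rewrite coef0M mulf_neq0.
rewrite -mulrA -Dr; apply: (@tofrac_inj {poly R}).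
by rewrite !rmorphM /= Dp Dh mulrA divfK ?tofracXn_neq0.
Qed.

Lemma fin_divisors_laurentS : fin_divisors P -> fin_divisors T.
Proof.
move=> hfd f hf.
have [p [hp p_0] fp] := laurent_normal hf.
have [LP hLP] := hfd p hp.
exists (map (@tofrac _) LP) => g hg gf.
have [q [hq q_0] gq] := laurent_normal hg.
have qp : Defs.sdvd P q p.
  apply: tofrac_sdvd => //.
  case: gq => [_ [_ [_ qg]]]; case: fp => [_ [_ [fp' _]]].
  by apply: (sdvd_trans laurentS_mul qg); apply: (sdvd_trans laurentS_mul gf).
have [l lLP ql] := hLP q hq qp.
exists (tofrac l); first exact: map_f.
by apply: (sassoc_trans laurentS_mul gq); apply: sassoc_tofrac.
Qed.

Lemma fin_divisors_of_laurentS : fin_divisors T -> fin_divisors S.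
Proof.
apply: (fin_divisors_reflect (phi := fun a => tofrac a%:P))
  => [|a b|a ha|a b ha hb].
- exact: laurentS_mul.
- by rewrite /= polyCM rmorphM.
- exact/snz_tofrac/snz_polyC.
move=> /tofrac_sdvd dab; apply: (sdvd_polyC hb); apply: dab; rewrite coefC /=.
  by apply/eqP; case: ha.
by apply/eqP; case: hb.
Qed.

End PolynomialSemidomains.

Theorem theorem4p4 (R : idomainType) (S : R -> Prop) (hS : semidomain S) :
  (FFS S <-> FFS (polyS S)) /\ (FFS S <-> FFS (laurentS S)).
Proof.
case: hS => [S0 [S1 [Sadd Smul]]].
have fdS := FFS_fin_divisorsP S1 Smul.
have fdP := FFS_fin_divisorsP (polyS1 S0 S1) (polyS_mul S0 Sadd Smul).
have fdT := FFS_fin_divisorsP (laurentS1 S0 S1) (laurentS_mul S0 Sadd Smul).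
split; split=> h.
- by apply/fdP/fin_divisors_polyS => //; apply/fdS.
- by apply/fdS/fin_divisors_of_polyS => //; apply/fdP.
- by apply/fdT/fin_divisors_laurentS/fin_divisors_polyS => //; apply/fdS.
- by apply/fdS/fin_divisors_of_laurentS => //; apply/fdT.
Qed.
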